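(* Let $G=(V,E)$ be a finite planar embedded graph, $\mathbf{p}$ a packing of $G$, and $V=V^+\sqcup V^-\sqcup V^=\sqcup V^0$ a partition. Then $\mathbf{p}$ is second order rigid if and only if every nontrivial proper infinitesimal flex $\mathbf{p}'$ is blocked by some equilibrium stress $\omega$.
   Context: A packing of $G=(V,E)$, $V=\{1,\dots,n\}$, is $\mathbf{p}=(x_1,y_1,r_1,\dots,x_n,y_n,r_n)\in\mathbb{R}^{3n}$, all $r_i>0$, with $(r_i+r_j)^2=(x_i-x_j)^2+(y_i-y_j)^2$ for all $(i,j)\in E$ and the neighbors of each vertex in the same counterclockwise order as in the embedding; $\mathbf{p}_i=(x_i,y_i)$. Partition: $V^+$ (radius may increase or stay), $V^-$ (may decrease or stay), $V^=$ (fixed), $V^0$ (free). An infinitesimal flex is $\mathbf{p}'$ with $(\mathbf{p}_i-\mathbf{p}_j)\cdot(\mathbf{p}_i'-\mathbf{p}_j')=(r_i+r_j)(r_i'+r_j')$ for all edges; proper if $r_i'\ge 0$ on $V^+$, $\le0$ on $V^-$, $=0$ on $V^=$; trivial if it is the derivative of a family of rigid motions (rotations/translations of centers, radii unchanged). For proper $\mathbf{p}'$, the modified partition is $\tilde V^+=\{i\in V^+:r_i'=0\}$, $\tilde V^-=\{i\in V^-:r_i'=0\}$, $\tilde V^==V^=$, $\tilde V^0$ the rest. $\mathbf{p}'$ is extendable if there is $\mathbf{p}''\in\mathbb{R}^{3n}$ with $(\mathbf{p}_i-\mathbf{p}_j)\cdot(\mathbf{p}_i''-\mathbf{p}_j'')-(r_i+r_j)(r_i''+r_j'')=(r_i'+r_j')^2-(\mathbf{p}_i'-\mathbf{p}_j')\cdot(\mathbf{p}_i'-\mathbf{p}_j')$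 for all $(i,j)\in E$, and $r_i''\ge0$ on $\tilde V^+$, $\le 0$ on $\tilde V^-$, $=0$ on $\tilde V^=$. $\mathbf{p}$ is second order rigid if no nontrivial proper infinitesimal flex is extendable. A stress $\omega:E\to\mathbb{R}$ is an equilibrium stress if $\sum_{j:(i,j)\in E}\omega_{ij}(\mathbf{p}_i-\mathbf{p}_j)=0$ for all $i$; its radial force sum is $\omega_i=\sum_{j:(i,j)\in E}\omega_{ij}(r_i+r_j)$. An equilibrium stress $\omega$ blocks $\mathbf{p}'$ if $\omega_i\ge 0$ for $i\in\tilde V^-$, $\omega_i\le0$ for $i\in\tilde V^+$, $\omega_i=0$ for $i\in\tilde V^0$, and $\sum_{(i,j)\in E}\omega_{ij}[(\mathbf{p}_i'-\mathbf{p}_j')\cdot(\mathbf{p}_i'-\mathbf{p}_j')-(r_i'+r_j')^2]>0$. *)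

From mathcomp Require Import all_boot all_order all_algebra.
From mathcomp Require Import reals.
Set Implicit Arguments. Unset Strict Implicit. Unset Printing Implicit Defensive.
Import Order.TTheory GRing.Theory Num.Theory.
Local Open Scope ring_scope.

(* The four blocks of the partition V = V^+ ⊔ V^- ⊔ V^= ⊔ V^0. *)
Inductive kind := KPlus | KMinus | KEq | KFree.

Section Packings.
Variables (R : realType) (n : nat).
Implicit Types (adj : rel 'I_n) (x y r : 'I_n -> R).

Definition cross (a b : R * R) : R := a.1 * b.2 - a.2 * b.1.
Definition dot (a b : R * R) : R := a.1 * b.1 + a.2 * b.2.
Definition vsub (a b : R * R) : R * R := (a.1 - b.1, a.2 - b.2).

(* the ccw angle from a to w lies in [0, pi) *)
Definition upper_half (a w : R * R) : bool :=
  (0 < cross a w) || ((cross a w == 0) && (0 < dot a w)).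
(* ccw angle from a to w is strictly smaller than ccw angle from a to b
   (angles measured in [0, 2 pi)) *)
Definition ang_lt (a w b : R * R) : bool :=
  if upper_half a w == upper_half a b then 0 < cross w b else upper_half a w.
Definition ang_pos (a w : R * R) : bool :=
  ~~ ((cross a w == 0) && (0 < dot a w)).
Definition in_ccw_sector (a b w : R * R) : bool := ang_pos a w && ang_lt a w b.

Definition ccw_order (c : R * R) (s : seq (R * R)) : Prop :=
  forall k m : nat, (k < size s)%N -> (m < size s)%N ->
    m != k -> m != (k.+1 %% size s)%N ->
    ~~ in_ccw_sector (vsub (nth c s k) c) (vsub (nth c s (k.+1 %% size s)) c)
                     (vsub (nth c s m) c).

(* The embedding is given by a rotation system: rot i lists the neighbours
   of i, each once, in their counterclockwise cyclic order. *)
Definition rotation_system adj (rot : 'I_n -> seq 'I_n) : Prop :=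
  forall i, uniq (rot i) /\ (forall j, (j \in rot i) = adj i j).

Definition center x y (i : 'I_n) : R * R := (x i, y i).

Definition is_packing adj (rot : 'I_n -> seq 'I_n) x y r : Prop :=
  [/\ forall i, 0 < r i,
      forall i j, adj i j ->
        (r i + r j) ^+ 2 = (x i - x j) ^+ 2 + (y i - y j) ^+ 2
    & forall i, ccw_order (center x y i) [seq center x y j | j <- rot i]].

Definition inf_flex adj x y r (x' y' r' : 'I_n -> R) : Prop :=
  forall i j, adj i j ->
    (x i - x j) * (x' i - x' j) + (y i - y j) * (y' i - y' j)
    = (r i + r j) * (r' i + r' j).

Definition sign_ok (k : kind) (v : R) : Prop :=
  match k return Prop with
  | KPlus => 0 <= v
  | KMinus => v <= 0
  | KEq => v = 0
  | KFree => True
  end.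

Definition proper_flex adj x y r (part : 'I_n -> kind) (x' y' r' : 'I_n -> R) :=
  inf_flex adj x y r x' y' r' /\ forall i, sign_ok (part i) (r' i).

(* derivative at t = 0 of a family of rigid motions (rotation by angle
   a t about the origin followed by translation (b t, c t), identity at 0):
   p_i' = a'(0) * J p_i + (b'(0), c'(0)), radii unchanged. *)
Definition trivial_flex x y (x' y' r' : 'I_n -> R) : Prop :=
  exists a b c : R, forall i,
    [/\ x' i = - a * y i + b, y' i = a * x i + c & r' i = 0].

Definition tkind (part : 'I_n -> kind) (r' : 'I_n -> R) (i : 'I_n) : kind :=
  match part i with
  | KPlus => if r' i == 0 then KPlus else KFree
  | KMinus => if r' i == 0 then KMinus else KFree
  | k => k
  end.

Definition extendable adj x y r (part : 'I_n -> kind) (x' y' r' : 'I_n -> R) :=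
  exists x'' y'' r'' : 'I_n -> R,
    (forall i j, adj i j ->
      (x i - x j) * (x'' i - x'' j) + (y i - y j) * (y'' i - y'' j)
        - (r i + r j) * (r'' i + r'' j)
      = (r' i + r' j) ^+ 2 - ((x' i - x' j) ^+ 2 + (y' i - y' j) ^+ 2))
    /\ forall i, sign_ok (tkind part r' i) (r'' i).

Definition second_order_rigid adj x y r (part : 'I_n -> kind) : Prop :=
  forall x' y' r', proper_flex adj x y r part x' y' r' ->
    ~ trivial_flex x y x' y' r' -> ~ extendable adj x y r part x' y' r'.

(* a stress is a function on (unordered) edges: w i j = w j i, only values
   on edges matter *)
Definition stress_sym (w : 'I_n -> 'I_n -> R) : Prop := forall i j, w i j = w j i.

Definition equilibrium adj x y (w : 'I_n -> 'I_n -> R) : Prop :=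
  forall i, \sum_(j | adj i j) w i j * (x i - x j) = 0
         /\ \sum_(j | adj i j) w i j * (y i - y j) = 0.

Definition radial_sum adj r (w : 'I_n -> 'I_n -> R) (i : 'I_n) : R :=
  \sum_(j | adj i j) w i j * (r i + r j).

(* sum over each (unordered) edge {i,j} once, as (i,j) with i < j *)
Definition blocks adj x y r (part : 'I_n -> kind) (x' y' r' : 'I_n -> R)
    (w : 'I_n -> 'I_n -> R) : Prop :=
  (forall i, match tkind part r' i return Prop with
             | KMinus => 0 <= radial_sum adj r w i
             | KPlus => radial_sum adj r w i <= 0
             | KFree => radial_sum adj r w i = 0
             | KEq => True
             end)
  /\ 0 < \sum_(i < n) \sum_(j < n | (i < j)%N && adj i j)
           w i j * (((x' i - x' j) ^+ 2 + (y' i - y' j) ^+ 2)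
                    - (r' i + r' j) ^+ 2).

End Packings.

From mathcomp Require Import all_boot all_order all_algebra.
From mathcomp Require Import reals.
From mathcomp Require Import ring lra.
Set Implicit Arguments. Unset Strict Implicit. Unset Printing Implicit Defensive.
Import Order.TTheory GRing.Theory Num.Theory.
Local Open Scope ring_scope.

(* Second-order rigidity says that, for every nontrivial proper flex p', the
   linear system for p'' with sign constraints on r'' is infeasible.  By
   Farkas' lemma this holds iff there is a dual certificate: a vector with one
   entry per edge whose pairing with the columns of x'' and y'' vanishes
   (equilibrium), whose pairing with the columns of r'' has the sign dictated by
   the modified partition (radial force sums), and whose pairing with the
   right-hand side is negative -- that is, a stress blocking p'.  Farkas' lemma
   itself is proved by Fourier-Motzkin elimination. *)

Section FourierMotzkin.
Variable R : realFieldType.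
Implicit Types I J : finType.

Lemma sum_delta I (k0 : I) (f : I -> R) : \sum_k (k == k0)%:R * f k = f k0.
Proof.
rewrite (bigD1 k0) //= eqxx mul1r big1 ?addr0 // => k /negbTE ->.
by rewrite mul0r.
Qed.

Lemma sum_pairE I J (F : I * J -> R) :
  \sum_p F p = \sum_i \sum_j F (i, j).
Proof. by rewrite pair_bigA; apply: eq_bigr => -[]. Qed.

Definition solves_le I J (A : I -> J -> R) (b : I -> R) (x : J -> R) :=
  forall k, \sum_j A k j * x j <= b k.

Definition farkas_cert I J (A : I -> J -> R) (b : I -> R) (l : I -> R) :=
  [/\ forall k, 0 <= l k, forall j, \sum_k l k * A k j = 0
    & \sum_k l k * b k < 0].

(* Take for [t] the largest of the lower bounds [s k / c k], [c k < 0]; the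
   pairwise hypothesis says that it stays below every upper bound. *)
Lemma scalar_ineqs_solvable_neg I (c s : I -> R) (q : I) : c q < 0 ->
  (forall k, c k = 0 -> 0 <= s k) ->
  (forall p q, 0 < c p -> c q < 0 -> c q * s p <= c p * s q) ->
  exists t, forall k, c k * t <= s k.
Proof.
move=> cq_lt0 s_ge0 bounds_ok.
have [q0 cq0_lt0 q0_max] := arg_maxP (fun k => s k / c k) (P := fun k => c k < 0) cq_lt0.
exists (s q0 / c q0) => k.
case: (ltgtP (c k) 0) => ck.
- by rewrite -ler_ndivrMl // mulrC; apply: q0_max.
- by rewrite mulrA ler_ndivrMr // mulrC bounds_ok.
- by rewrite ck mul0r s_ge0.
Qed.

Lemma scalar_ineqs_solvable I (c s : I -> R) :
  (forall k, c k = 0 -> 0 <= s k) ->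
  (forall p q, 0 < c p -> c q < 0 -> c q * s p <= c p * s q) ->
  exists t, forall k, c k * t <= s k.
Proof.
move=> s_ge0 bounds_ok.
have [/existsP [q cq_lt0]|/existsPn c_ge0] := boolP [exists q, c q < 0].
  exact: scalar_ineqs_solvable_neg cq_lt0 s_ge0 bounds_ok.
have {}c_ge0 k : 0 <= c k by rewrite leNgt c_ge0.
have [/existsP [p cp_gt0]|/existsPn c_le0] := boolP [exists p, 0 < c p].
  have [|k /eqP|p' q|t ht] := @scalar_ineqs_solvable_neg I (-%R \o c) s p.
  - by rewrite /= oppr_lt0.
  - by rewrite /= oppr_eq0 => /eqP /s_ge0.
  - by rewrite /= oppr_gt0 ltNge c_ge0.
  by exists (- t) => k; rewrite mulrN -mulNr ht.
exists 0 => k; rewrite mulr0 s_ge0 //.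
by apply/eqP; rewrite eq_le leNgt c_le0 c_ge0.
Qed.

(* Fourier-Motzkin combinations of rows eliminating the column [c]: keep the
   rows where [c] vanishes, and cancel [c] between each pair of rows of
   opposite signs. *)
Definition fm_row I (c : I -> R) (p : I + I * I) (k : I) : R :=
  match p with
  | inl k0 => if c k0 == 0 then (k == k0)%:R else 0
  | inr (p, q) =>
      if (0 < c p) && (c q < 0) then c p * (k == q)%:R - c q * (k == p)%:R else 0
  end.

Lemma fm_rowE I (c f : I -> R) p : \sum_k fm_row c p k * f k =
  match p with
  | inl k0 => if c k0 == 0 then f k0 else 0
  | inr (p, q) => if (0 < c p) && (c q < 0) then c p * f q - c q * f p else 0
  end.
Proof.
case: p => [k0|[p q]] /=; case: ifP => _.
- exact: sum_delta.
- by rewrite big1 // => k _; rewrite mul0r.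
- under eq_bigr do rewrite mulrBl -!mulrA.
  by rewrite sumrB -!mulr_sumr !sum_delta.
- by rewrite big1 // => k _; rewrite mul0r.
Qed.

Lemma fm_row_ge0 I (c : I -> R) p k : 0 <= fm_row c p k.
Proof.
case: p => [k0|[p q]] /=; first by case: ifP; rewrite ?ler0n.
case: ifP => // /andP [cp_gt0 cq_lt0].
rewrite subr_ge0 (@le_trans _ _ 0) //.
  by rewrite mulr_le0_ge0 // ltW.
by rewrite mulr_ge0 // ltW.
Qed.

Lemma fm_row_annihilates I (c : I -> R) p : \sum_k fm_row c p k * c k = 0.
Proof.
rewrite fm_rowE; case: p => [k0|[p q]]; case: ifP => //; first by move/eqP.
by rewrite mulrC subrr.
Qed.

Lemma fm_row_solvable I (c s : I -> R) :
  (forall p, 0 <= \sum_k fm_row c p k * s k) -> exists t, forall k, c k * t <= s k.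
Proof.
move=> hs; apply: scalar_ineqs_solvable => [k ck0|p q cp cq].
  by have := hs (inl k); rewrite fm_rowE ck0 eqxx.
by have := hs (inr (p, q)); rewrite fm_rowE cp cq subr_ge0.
Qed.

Lemma sum_mulA I J (u : I -> R) (M : I -> J -> R) (v : J -> R) :
  \sum_i u i * \sum_j M i j * v j = \sum_j (\sum_i u i * M i j) * v j.
Proof.
under eq_bigr do rewrite mulr_sumr.
rewrite exchange_big; apply: eq_bigr => j _; rewrite mulr_suml.
by apply: eq_bigr => i _; rewrite mulrA.
Qed.

Lemma farkas_cert_comb I I' J (M : I' -> I -> R) (A : I -> J -> R) (b : I -> R) l :
  (forall p k, 0 <= M p k) ->
  farkas_cert (fun p j => \sum_k M p k * A k j) (fun p => \sum_k M p k * b k) l ->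
  farkas_cert A b (fun k => \sum_p l p * M p k).
Proof.
move=> M_ge0 [l_ge0 lA0 lb_lt0]; split.
- by move=> k; apply: sumr_ge0 => p _; rewrite mulr_ge0.
- by move=> j; rewrite -sum_mulA; exact: lA0.
- by rewrite -sum_mulA.
Qed.

Lemma fm_lift I J (A : I -> J -> R) (b : I -> R) (j0 : J) (x : J -> R) :
  solves_le (fun p j => \sum_k fm_row (A^~ j0) p k * A k j)
            (fun p => \sum_k fm_row (A^~ j0) p k * b k) x ->
  exists x', solves_le A b x'.
Proof.
set c := A^~ j0 => hx.
pose Ax k := \sum_j A k j * x j.
have [t ht] : exists t, forall k, c k * t <= b k - Ax k + c k * x j0.
  apply: fm_row_solvable => p.
  under eq_bigr do rewrite mulrDr mulrBr mulrA.
  rewrite big_split sumrB /= -(mulr_suml _ _ _ (x j0)) fm_row_annihilates mul0r addr0.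
  by rewrite subr_ge0 sum_mulA; apply: hx.
pose x' j := x j + (j == j0)%:R * (t - x j0).
have Ax' k : \sum_j A k j * x' j = Ax k + c k * (t - x j0).
  under eq_bigr do rewrite mulrDr mulrCA.
  by rewrite big_split /= sum_delta.
exists x' => k; rewrite Ax'; have := ht k; lra.
Qed.

Lemma farkas_le_supp m I J (A : I -> J -> R) (b : I -> R) (S : {set J}) :
  (#|S| <= m)%N -> (forall k j, j \notin S -> A k j = 0) ->
  ~ (exists x, solves_le A b x) -> exists l, farkas_cert A b l.
Proof.
elim: m I A b S => [|m IH] I A b S.
  rewrite leqn0 cards_eq0 => /eqP -> A0 infeas.
  have /forallPn [k] : ~~ [forall k, 0 <= b k].
    apply/forallP => b_ge0; apply: infeas; exists (fun=> 0) => k.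
    by rewrite big1 ?b_ge0 // => j _; rewrite mulr0.
  rewrite -ltNge => bk_lt0.
  exists (fun k' => (k' == k)%:R); split.
  - by move=> k'; rewrite ler0n.
  - by move=> j; rewrite sum_delta A0 ?inE.
  - by rewrite sum_delta.
move=> S_le A_S infeas.
have [S_le_m|m_lt_S] := leqP #|S| m; first exact: IH S_le_m A_S infeas.
have /set0Pn [j0 j0S] : S != set0 by rewrite -card_gt0 (leq_ltn_trans _ m_lt_S).
have [|||l' cert'] := IH _ (fun p j => \sum_k fm_row (A^~ j0) p k * A k j)
                         (fun p => \sum_k fm_row (A^~ j0) p k * b k) (S :\ j0).
- by move: S_le; rewrite (cardsD1 j0 S) j0S add1n ltnS.
- move=> p j; rewrite !inE negb_and negbK => /predU1P [->|jS].
    exact: fm_row_annihilates.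
  by rewrite big1 // => k _; rewrite A_S ?mulr0.
- by move=> [x' hx']; apply: infeas; exact: fm_lift hx'.
by eexists; apply: farkas_cert_comb cert' => p k; apply: fm_row_ge0.
Qed.

Lemma farkas_le I J (A : I -> J -> R) (b : I -> R) :
  ~ (exists x, solves_le A b x) -> exists l, farkas_cert A b l.
Proof. by apply: (@farkas_le_supp _ _ _ _ _ [set: J]) => // k j; rewrite inE. Qed.

End FourierMotzkin.

Section SignedFarkas.
Variable R : realType.
Implicit Types I J : finType.

Definition dual_kind (k : kind) : kind :=
  match k with KEq => KFree | KFree => KEq | _ => k end.

Definition nonneg_kind (k : kind) : bool :=
  match k with KPlus | KEq => true | _ => false end.
Definition nonpos_kind (k : kind) : bool :=
  match k with KMinus | KEq => true | _ => false end.

Lemma sign_ok_dual_mul_ge0 k (v u : R) :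
  sign_ok k v -> sign_ok (dual_kind k) u -> 0 <= v * u.
Proof.
case: k => /=; first exact: mulr_ge0; first exact: mulr_le0.
  by move=> -> _; rewrite mul0r.
by move=> _ ->; rewrite mulr0.
Qed.

Lemma sign_ok_dual_oppr k (v : R) : sign_ok (dual_kind k) (- v) <->
  match k return Prop with
  | KMinus => 0 <= v | KPlus => v <= 0 | KFree => v = 0 | KEq => True
  end.
Proof.
case: k => /=; rewrite ?oppr_ge0 ?oppr_le0 //.
by split=> [/eqP|->]; rewrite ?oppr0 // oppr_eq0 => /eqP.
Qed.

(* Equations become pairs of opposite inequalities and sign constraints the
   inequalities [- x j <= 0] and [x j <= 0] (both of them for [KEq]). *)
Definition stack_mat I J (A : I -> J -> R) (s : J -> kind)
    (k : (I + I) + (J + J)) (j : J) : R :=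
  match k with
  | inl (inl e) => A e j
  | inl (inr e) => - A e j
  | inr (inl j0) => (j == j0)%:R * - (nonneg_kind (s j0))%:R
  | inr (inr j0) => (j == j0)%:R * (nonpos_kind (s j0))%:R
  end.

Definition stack_rhs I J (b : I -> R) (k : (I + I) + (J + J)) : R :=
  match k with inl (inl e) => b e | inl (inr e) => - b e | inr _ => 0 end.

Lemma stack_solves_le I J (A : I -> J -> R) (b : I -> R) s x :
  solves_le (stack_mat A s) (stack_rhs b) x ->
  (forall e, \sum_j A e j * x j = b e) /\ forall j, sign_ok (s j) (x j).
Proof.
move=> hx; split=> [e|j].
  apply/eqP; rewrite eq_le (hx (inl (inl e))) -lerN2 -sumrN.
  by under eq_bigr do rewrite -mulNr; exact: hx (inl (inr e)).
have := hx (inr (inl j)); rewrite /=.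
under eq_bigr do rewrite mulrAC; rewrite -mulr_suml sum_delta => lo.
have := hx (inr (inr j)); rewrite /=.
under eq_bigr do rewrite mulrAC; rewrite -mulr_suml sum_delta => hi.
case: (s j) lo hi => /=; rewrite ?mulrN1 ?mulr1 ?mulr0 ?oppr_le0 // => lo hi.
by apply/eqP; rewrite eq_le lo hi.
Qed.

Lemma stack_cert I J (A : I -> J -> R) (b : I -> R) s l :
  farkas_cert (stack_mat A s) (stack_rhs b) l ->
  let w e := l (inl (inl e)) - l (inl (inr e)) in
  (forall j, sign_ok (dual_kind (s j)) (\sum_e w e * A e j)) /\ \sum_e w e * b e < 0.
Proof.
move=> [l_ge0 lA lb] w.
have stacked (f : I -> R) :
    \sum_e l (inl (inl e)) * f e + \sum_e l (inl (inr e)) * - f e = \sum_e w e * f e.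
  by rewrite -big_split; apply: eq_bigr => e _; rewrite mulrN mulrBl.
split=> [j|].
  have sign_col (l' c : J -> R) : \sum_i l' i * ((j == i)%:R * c i) = l' j * c j.
    by under eq_bigr do rewrite mulrCA eq_sym; rewrite sum_delta.
  have := lA j; rewrite !big_sumType /= !sign_col (stacked (A^~ j)).
  have := l_ge0 (inr (inl j)); have := l_ge0 (inr (inr j)).
  by case: (s j) => /=; rewrite ?mulr0 ?mulr1 ?mulrN1; lra.
move: lb; rewrite !big_sumType /= stacked.
have sum_mul0 (f : J -> R) : \sum_i f i * 0 = 0 by rewrite big1 // => i _; rewrite mulr0.
by rewrite !sum_mul0 !addr0.
Qed.

Lemma farkas_signed I J (A : I -> J -> R) (b : I -> R) (s : J -> kind) :
  ~ (exists x, (forall e, \sum_j A e j * x j = b e) /\ forall j, sign_ok (s j) (x j))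
  <-> exists w, (forall j, sign_ok (dual_kind (s j)) (\sum_e w e * A e j))
                /\ \sum_e w e * b e < 0.
Proof.
split=> [infeas|[w [w_dual wb_lt0]] [x [Ax_b x_sign]]].
  have [l cert] : exists l, farkas_cert (stack_mat A s) (stack_rhs b) l.
    by apply: farkas_le => -[x /stack_solves_le sol]; apply: infeas; exists x.
  by eexists; exact: stack_cert cert.
suff : 0 <= \sum_e w e * b e by rewrite leNgt wb_lt0.
under eq_bigr do rewrite -Ax_b.
rewrite sum_mulA; apply: sumr_ge0 => j _; rewrite mulrC.
exact: sign_ok_dual_mul_ge0 (x_sign j) (w_dual j).
Qed.

End SignedFarkas.

Section StressDuality.
Variables (R : realType) (n : nat) (adj : rel 'I_n).
Hypotheses (adj_sym : symmetric adj) (adj_irr : irreflexive adj).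

Definition edge (i j : 'I_n) : bool := (i < j)%N && adj i j.

Lemma sum_adj_split k (F : 'I_n -> R) :
  \sum_j (if edge k j then F j else 0) + \sum_i (if edge i k then F i else 0)
  = \sum_(j | adj k j) F j.
Proof.
rewrite -big_split [RHS]big_mkcond; apply: eq_bigr => j _.
rewrite /edge (adj_sym j k); case: ltngtP => [||/val_inj ->] /=.
- by rewrite addr0.
- by rewrite add0r.
- by rewrite adj_irr addr0.
Qed.

Lemma sum_edges_at k (G : 'I_n -> 'I_n -> R) :
  \sum_i \sum_j (if edge i j then (k == i)%:R * G i j + (k == j)%:R * G j i else 0)
  = \sum_(j | adj k j) G k j.
Proof.
have pick (e : rel 'I_n) (F : 'I_n -> 'I_n -> R) :
    \sum_i \sum_j (if e i j then (k == i)%:R * F i j else 0)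
    = \sum_j (if e k j then F k j else 0).
  rewrite -(sum_delta k (fun i => \sum_j (if e i j then F i j else 0))).
  apply: eq_bigr => i _; rewrite mulr_sumr eq_sym; apply: eq_bigr => j _.
  by case: ifP; rewrite ?mulr0.
have split_if (c : bool) (a b : R) :
  (if c then a + b else 0) = (if c then a else 0) + (if c then b else 0).
  by case: c; rewrite ?addr0.
under eq_bigr do under eq_bigr do rewrite split_if.
under eq_bigr do rewrite big_split.
rewrite big_split /= pick exchange_big /= -sum_adj_split.
by rewrite (pick (fun j i => edge i j) (fun j i => G j i)).
Qed.

Lemma sum_edges_diff (W : 'I_n -> 'I_n -> R) (z : 'I_n -> R) k : stress_sym W ->
  \sum_e W e.1 e.2 *
    (if edge e.1 e.2 then (z e.1 - z e.2) * ((k == e.1)%:R - (k == e.2)%:R) else 0)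
  = \sum_(j | adj k j) W k j * (z k - z j).
Proof.
move=> W_sym; rewrite sum_pairE -(sum_edges_at k (fun i j => W i j * (z i - z j))).
apply: eq_bigr => i _; apply: eq_bigr => j _ /=.
by case: edge; rewrite ?mulr0 // (W_sym j i); ring.
Qed.

Variables (x y r x' y' r' : 'I_n -> R) (part : 'I_n -> kind).

(* The extension system: one row per edge, stored as the pair (i, j) with
   i < j (other pairs give zero rows), and the unknowns x'' k, y'' k, r'' k in
   the columns inl (inl k), inl (inr k), inr k. *)
Definition ext_mat (e : 'I_n * 'I_n) (v : ('I_n + 'I_n) + 'I_n) : R :=
  if edge e.1 e.2 then
    match v with
    | inl (inl k) => (x e.1 - x e.2) * ((k == e.1)%:R - (k == e.2)%:R)
    | inl (inr k) => (y e.1 - y e.2) * ((k == e.1)%:R - (k == e.2)%:R)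
    | inr k => - ((r e.1 + r e.2) * ((k == e.1)%:R + (k == e.2)%:R))
    end
  else 0.

Definition ext_rhs (e : 'I_n * 'I_n) : R :=
  if edge e.1 e.2 then
    (r' e.1 + r' e.2) ^+ 2 - ((x' e.1 - x' e.2) ^+ 2 + (y' e.1 - y' e.2) ^+ 2)
  else 0.

Definition ext_kind (v : ('I_n + 'I_n) + 'I_n) : kind :=
  if v is inr k then tkind part r' k else KFree.

Lemma ext_mat_row e (X : ('I_n + 'I_n) + 'I_n -> R) :
  \sum_v ext_mat e v * X v =
  if edge e.1 e.2 then
    (x e.1 - x e.2) * (X (inl (inl e.1)) - X (inl (inl e.2))) +
    (y e.1 - y e.2) * (X (inl (inr e.1)) - X (inl (inr e.2))) -
    (r e.1 + r e.2) * (X (inr e.1) + X (inr e.2))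
  else 0.
Proof.
rewrite /ext_mat; case: (edge e.1 e.2); last by rewrite big1 // => v _; rewrite mul0r.
rewrite !big_sumType /=.
have sum_diff (c : R) (f : 'I_n -> R) :
  \sum_k (c * ((k == e.1)%:R - (k == e.2)%:R)) * f k = c * (f e.1 - f e.2).
  under eq_bigr do rewrite -mulrA mulrBl.
  by rewrite -mulr_sumr sumrB !sum_delta.
have sum_add (c : R) (f : 'I_n -> R) :
  \sum_k - (c * ((k == e.1)%:R + (k == e.2)%:R)) * f k = - (c * (f e.1 + f e.2)).
  under eq_bigr do rewrite mulNr -mulrA mulrDl.
  by rewrite sumrN -mulr_sumr big_split /= !sum_delta.
by rewrite !sum_diff sum_add.
Qed.

Lemma extendableE : extendable adj x y r part x' y' r' <->
  exists X, (forall e, \sum_v ext_mat e v * X v = ext_rhs e)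
            /\ forall v, sign_ok (ext_kind v) (X v).
Proof.
split=> [[x'' [y'' [r'' [eqs signs]]]]|[X [eqs signs]]].
  exists (fun v => match v with
                   | inl (inl k) => x'' k | inl (inr k) => y'' k | inr k => r'' k end).
  split=> [e|[[k|k]|k] //=].
  rewrite ext_mat_row /ext_rhs; case: ifP => // /andP [_ e_adj].
  exact: eqs.
exists (X \o inl \o inl), (X \o inl \o inr), (X \o inr).
split=> [i j ij_adj|k]; last exact: signs (inr k).
have [lt_ij|lt_ji|/val_inj eq_ij] := ltngtP i j.
- by have := eqs (i, j); rewrite ext_mat_row /ext_rhs /edge /= lt_ij ij_adj.
- have := eqs (j, i); rewrite ext_mat_row /ext_rhs /edge /= lt_ji adj_sym ij_adj /=.
  move=> eq_ji; lra.
- by move: ij_adj; rewrite eq_ij adj_irr.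
Qed.

Lemma ext_mat_col_r (W : 'I_n -> 'I_n -> R) k : stress_sym W ->
  \sum_e W e.1 e.2 * ext_mat e (inr k) = - radial_sum adj r W k.
Proof.
move=> W_sym; rewrite /radial_sum -(sum_edges_at k (fun i j => W i j * (r i + r j))).
rewrite -sumrN sum_pairE.
apply: eq_bigr => i _; rewrite -sumrN; apply: eq_bigr => j _.
by rewrite /ext_mat /=; case: edge; rewrite ?mulr0 ?oppr0 // (W_sym j i); ring.
Qed.

Lemma ext_rhs_stress (W : 'I_n -> 'I_n -> R) :
  \sum_e W e.1 e.2 * ext_rhs e =
  - \sum_(i < n) \sum_(j < n | (i < j)%N && adj i j)
      W i j * (((x' i - x' j) ^+ 2 + (y' i - y' j) ^+ 2) - (r' i + r' j) ^+ 2).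
Proof.
rewrite sum_pairE -sumrN; apply: eq_bigr => i _.
rewrite -sumrN [RHS]big_mkcond; apply: eq_bigr => j _.
by rewrite /ext_rhs /edge /=; case: (_ && _); rewrite ?mulr0 ?oppr0 //; ring.
Qed.

Lemma ext_dual_stressE (W : 'I_n -> 'I_n -> R) : stress_sym W ->
  (forall v, sign_ok (dual_kind (ext_kind v)) (\sum_e W e.1 e.2 * ext_mat e v))
    /\ \sum_e W e.1 e.2 * ext_rhs e < 0
  <-> equilibrium adj x y W /\ blocks adj x y r part x' y' r' W.
Proof.
move=> W_sym; rewrite ext_rhs_stress oppr_lt0.
have col_x k := sum_edges_diff x k W_sym; have col_y k := sum_edges_diff y k W_sym.
split=> [[cols pos]|[equil [radial pos]]]; split=> //.
- move=> k; rewrite -col_x -col_y.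
  by split; [exact: cols (inl (inl k)) | exact: cols (inl (inr k))].
- by split=> // k; have := cols (inr k); rewrite /= ext_mat_col_r // sign_ok_dual_oppr.
- case=> [[k|k]|k].
  + by rewrite /= col_x; exact: (equil k).1.
  + by rewrite /= col_y; exact: (equil k).2.
  + by rewrite ext_mat_col_r // sign_ok_dual_oppr; exact: radial.
Qed.

Lemma blocking_stressE :
  (exists W, [/\ stress_sym W, equilibrium adj x y W & blocks adj x y r part x' y' r' W])
  <-> exists w, (forall v, sign_ok (dual_kind (ext_kind v)) (\sum_e w e * ext_mat e v))
                /\ \sum_e w e * ext_rhs e < 0.
Proof.
split=> [[W [W_sym equil blocked]]|[w [cols rhs_lt0]]].
  by exists (fun e => W e.1 e.2); apply/(ext_dual_stressE W_sym).
pose W (i j : 'I_n) := if (i < j)%N then w (i, j) else w (j, i).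
have W_sym : stress_sym W by move=> i j; rewrite /W; case: ltngtP => // /val_inj ->.
have on_edges (F : 'I_n * 'I_n -> R) : (forall e, ~~ edge e.1 e.2 -> F e = 0) ->
    \sum_e w e * F e = \sum_e W e.1 e.2 * F e.
  move=> F0; apply: eq_bigr => -[i j] _ /=.
  have [/andP [lt_ij _]|/(F0 (i, j)) ->] := boolP (edge i j); last by rewrite !mulr0.
  by rewrite /W lt_ij.
have [equil blocked] : equilibrium adj x y W /\ blocks adj x y r part x' y' r' W.
  apply/(ext_dual_stressE W_sym); split=> [v|].
    by rewrite -(on_edges (ext_mat^~ v)) // => e /negbTE; rewrite /ext_mat => ->.
  by rewrite -on_edges // => e /negbTE; rewrite /ext_rhs => ->.
by exists W.
Qed.

Lemma not_extendable_iff_blocked : ~ extendable adj x y r part x' y' r' <->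
  exists W, [/\ stress_sym W, equilibrium adj x y W & blocks adj x y r part x' y' r' W].
Proof. by rewrite blocking_stressE -farkas_signed extendableE. Qed.

End StressDuality.

Theorem mainTheorem10 (R : realType) (n : nat) (adj : rel 'I_n)
    (rot : 'I_n -> seq 'I_n) (x y r : 'I_n -> R) (part : 'I_n -> kind) :
  symmetric adj -> irreflexive adj -> rotation_system adj rot ->
  is_packing adj rot x y r ->
  (second_order_rigid adj x y r part <->
   forall x' y' r' : 'I_n -> R,
     proper_flex adj x y r part x' y' r' -> ~ trivial_flex x y x' y' r' ->
     exists w : 'I_n -> 'I_n -> R,
       [/\ stress_sym w, equilibrium adj x y w &
           blocks adj x y r part x' y' r' w]).
Proof.
move=> adj_sym adj_irr _ _.
split=> [rigid x' y' r' proper nontrivial|blocked x' y' r' proper nontrivial].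
  exact/(not_extendable_iff_blocked adj_sym adj_irr)/(rigid _ _ _ proper nontrivial).
exact/(not_extendable_iff_blocked adj_sym adj_irr)/(blocked _ _ _ proper nontrivial).
Qed.
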